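(* Let $S$ be a topological Clifford semigroup which is $C^1$ at the idempotents. Then the semilattice of idempotents $E(S)$ is discrete in the subspace topology inherited from $S$. Consequently every maximal subgroup $G_e$ ($e\in E(S)$) is open in $S$, and $S$ is a strong semilattice of topological groups.
   Context: An inverse semigroup is a semigroup $S$ in which every $x$ has a unique $x^{-1}$ with $xx^{-1}x=x$ and $x^{-1}xx^{-1}=x^{-1}$. A Clifford semigroup is an inverse semigroup with $xx^{-1}=x^{-1}x$ for all $x$ (equivalently, all idempotents are central). $E(S)=\{e\in S: e^2=e\}$ is a commutative semigroup of idempotents (a semilattice), ordered by $e\le f\iff ef=e$. For $e\in E(S)$, $G_e:=\{x\in S: xx^{-1}=e\}$ is a group with identity $e$ (the maximal subgroup at $e$), and $S=\bigsqcup_{e\in E(S)}G_e$. For $e\le f$ the bonding map is $\varphi_{f,e}\colon G_f\to G_e$, $x\mapsto ex$. A topological Clifford semigroup is a Clifford semigroup with a topology making multiplication $S\times S\to S$ and inversion $x\mapsto x^{-1}$ continuous; each $G_e$ carries the subspace topology. $S$ is a strong semilattice of topological groups if the bonding maps are continuous and the topology of $S$ is the disjoint-union (topological sum) topology of the subspaces $G_e$, $e\in E(S)$. $S$ is $C^1$ at the idempotents if for every $e\in E(S)$ there exist a Banach space $X_e$, open sets $e\in U_e\subseteq W_e\subseteq S$, and a homeomorphism $\varphi_e\colon W_e\to V_e$ onto an open subset $V_e\subseteq X_e$ with $\varphi_e(e)=0$, such that $U_eU_e\subseteq W_e$ and the map $\varphi_e(U_e)\times\varphi_e(U_e)\to X_e$,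 $(u,v)\mapsto \varphi_e(\varphi_e^{-1}(u)\varphi_e^{-1}(v))$, is of class $C^1$ in the Fréchet sense. *)

From HB Require Import structures.
From mathcomp Require Import all_boot all_order all_algebra.
From mathcomp Require Import all_classical all_reals all_analysis.
Set Implicit Arguments. Unset Strict Implicit. Unset Printing Implicit Defensive.
Import Order.TTheory GRing.Theory Num.Theory numFieldNormedType.Exports.
Local Open Scope classical_set_scope.
Local Open Scope ring_scope.

Definition top_clifford_semigroup (S : topologicalType)
    (mul : S -> S -> S) (inv : S -> S) : Prop :=
  (forall x y z, mul x (mul y z) = mul (mul x y) z) /\
  (* inverse semigroup: inv x is an inverse of x, and the unique one *)
  (forall x, mul (mul x (inv x)) x = x) /\
  (forall x, mul (mul (inv x) x) (inv x) = inv x) /\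
  (forall x y, mul (mul x y) x = x -> mul (mul y x) y = y -> y = inv x) /\
  (forall x, mul x (inv x) = mul (inv x) x) /\
  continuous (fun p : S * S => mul p.1 p.2) /\
  continuous inv.

Definition idempotents (S : Type) (mul : S -> S -> S) : set S :=
  [set e | mul e e = e].

Definition max_subgroup (S : Type) (mul : S -> S -> S) (inv : S -> S) (e : S)
  : set S := [set x | mul x (inv x) = e].

Definition idem_le (S : Type) (mul : S -> S -> S) (e f : S) : Prop :=
  mul e f = e.

Definition homeo_onto (T U : topologicalType) (W : set T) (V : set U)
    (phi : T -> U) (psi : U -> T) : Prop :=
    (forall x, W x -> V (phi x)) /\ (forall v, V v -> W (psi v)) /\
    (forall x, W x -> psi (phi x) = x) /\ (forall v, V v -> phi (psi v) = v) /\
    {within W, continuous phi} /\ {within V, continuous psi}.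

(* Frechet C^1 on an open set D: differentiable at each point of D, and the
   derivative p |-> 'd F p is continuous in the operator norm on D. *)
Definition C1_on (R : realType) (X Y : normedModType R) (D : set X)
    (F : X -> Y) : Prop :=
  (forall p, D p -> differentiable F p) /\
  (forall p, D p -> forall eps : R, 0 < eps ->
     \forall q \near p, forall h : X, `|'d F q h - 'd F p h| <= eps * `|h|).

Definition C1_at_idempotents (R : realType) (S : topologicalType)
    (mul : S -> S -> S) : Prop :=
  forall e, idempotents mul e ->
  exists (X : completeNormedModType R) (U W : set S) (V : set X)
         (phi : S -> X) (psi : X -> S),
    open U /\ open W /\ U e /\ U `<=` W /\ open V /\
    homeo_onto W V phi psi /\ phi e = 0 /\
    (forall u v, U u -> U v -> W (mul u v)) /\
    C1_on [set p : X * X | (phi @` U) p.1 /\ (phi @` U) p.2]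
      (fun p : X * X => phi (mul (psi p.1) (psi p.2))).

From HB Require Import structures.
From mathcomp Require Import all_boot all_order all_algebra.
From mathcomp Require Import all_classical all_reals all_analysis.
From mathcomp Require Import lra.
Import Order.TTheory GRing.Theory Num.Theory numFieldNormedType.Exports.
Local Open Scope classical_set_scope.
Local Open Scope ring_scope.

(* Near an idempotent e, read the multiplication in a C^1 chart phi with
   phi e = 0 as F (u, v) = phi (psi u * psi v).  As F 0 = 0 and 'd F 0 is linear,
   the defect F (z, z) - F (z, 0) - F (0, z) is o(|z|).  For an idempotent f
   commuting with e, z = phi f, this defect is -z if f <= e and z if e <= f, so
   such an f close to e equals e.  An idempotent f near e yields the idempotent
   e f <= e, again near e; hence e f = e, i.e. e <= f, and then f = e.  The sets
   G_e are the fibres of the continuous map x |-> x x^-1 over the now isolated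
   points of E(S), so they are open, and an open cover carries the sum topology. *)

Definition inverse_semigroup (T : Type) (mul : T -> T -> T) (inv : T -> T) : Prop :=
  (forall x y z, mul x (mul y z) = mul (mul x y) z) /\
  (forall x, mul (mul x (inv x)) x = x) /\
  (forall x, mul (mul (inv x) x) (inv x) = inv x) /\
  (forall x y, mul (mul x y) x = x -> mul (mul y x) y = y -> y = inv x).
Arguments inverse_semigroup {T}.

Lemma top_clifford_inverse_semigroup {S : topologicalType}
    {mul : S -> S -> S} {inv : S -> S} :
  top_clifford_semigroup mul inv -> inverse_semigroup mul inv.
Proof. by case=> mulA [mul_inv_mul [inv_mul_inv [inv_unique _]]]; do !split. Qed.

Section InverseSemigroup.
Context {T : Type} {mul : T -> T -> T} {inv : T -> T}.
Hypothesis isg : inverse_semigroup mul inv.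

Let mulA x y z : mul x (mul y z) = mul (mul x y) z.
Proof. by case: isg. Qed.
Let mul_inv_mul x : mul (mul x (inv x)) x = x.
Proof. by case: isg => _ []. Qed.
Let inv_mul_inv x : mul (mul (inv x) x) (inv x) = inv x.
Proof. by case: isg => _ [_ []]. Qed.
Let inv_unique x y : mul (mul x y) x = x -> mul (mul y x) y = y -> y = inv x.
Proof. by case: isg => _ [_ [_]]; apply. Qed.

Lemma invK x : inv (inv x) = x.
Proof. by symmetry; apply: inv_unique; [apply: inv_mul_inv | apply: mul_inv_mul]. Qed.

Lemma idempotent_inv {e} : idempotents mul e -> inv e = e.
Proof. by move=> ee; symmetry; apply: inv_unique; rewrite ee ee. Qed.

Lemma idempotent_mulK {e} : idempotents mul e -> forall t, mul (mul t e) e = mul t e.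
Proof. by move=> ee t; rewrite -mulA ee. Qed.

Lemma idempotent_mul {e f} :
  idempotents mul e -> idempotents mul f -> idempotents mul (mul e f).
Proof.
move=> ee ff; set x := inv (mul e f).
have efxef : mul (mul (mul (mul e f) x) e) f = mul e f.
  by rewrite -mulA mul_inv_mul.
have xefx t : mul (mul (mul (mul t x) e) f) x = mul t x.
  have xefx : mul (mul x (mul e f)) x = x := inv_mul_inv _.
  by rewrite -[in RHS]xefx !mulA.
have fxe : mul (mul f x) e = x.
  apply: inv_unique; rewrite !mulA !(idempotent_mulK ee, idempotent_mulK ff).
    by rewrite efxef.
  by rewrite xefx.
have xx : mul x x = x by rewrite -{1 2}fxe !mulA xefx fxe.
by rewrite /idempotents -(invK (mul e f)) -/x idempotent_inv.
Qed.

Lemma idempotent_comm {e f} :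
  idempotents mul e -> idempotents mul f -> mul e f = mul f e.
Proof.
move=> ee ff; have ef := idempotent_mul ee ff; have fe := idempotent_mul ff ee.
apply/esym; rewrite -[in RHS](idempotent_inv ef).
apply: inv_unique; rewrite !mulA !(idempotent_mulK ee, idempotent_mulK ff) -mulA.
  exact: ef.
exact: fe.
Qed.

Lemma idempotent_mul_inv x : idempotents mul (mul x (inv x)).
Proof. by rewrite /idempotents /= mulA mul_inv_mul. Qed.
End InverseSemigroup.

Lemma subr_cross_defect (V : zmodType) (a p q b c : V) :
  a - p - q = (a - (b + c)) - (p - b) - (q - c).
Proof.
by rewrite !opprB opprD !addrA [a - b - c + b]addrAC subrK [a - c - p + c]addrAC subrK.
Qed.

Section CrossDefect.
Variables (R : realType) (X : normedModType R) (F : X * X -> X).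
Hypotheses (dF : differentiable F 0) (F0 : F 0 = 0).

Lemma differentiable_cross_defect (eps : R) : 0 < eps ->
  \forall z \near 0, `|F (z, z) - F (z, 0) - F (0, z)| <= eps * `|z|.
Proof.
move=> eps_gt0; have eps3_gt0 : 0 < eps / 3 by rewrite divr_gt0.
have /eqaddoP /(_ _ eps3_gt0) /nbhs_norm0P [d d_gt0 Fo] := diff_locally dF.
set D := 'd F 0.
have FD (h : X * X) : `|h| < d -> `|F h - D h| <= eps / 3 * `|h|.
  by move=> /Fo /=; rewrite !fctE /= addr0 F0 add0r.
apply/nbhs_norm0P; exists d => // z /= zd.
have nzz : `|(z, z) : X * X| = `|z| by rewrite prod_normE /= maxxx.
have nz0 : `|(z, 0) : X * X| = `|z| by rewrite prod_normE /= normr0 max_l.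
have n0z : `|(0, z) : X * X| = `|z| by rewrite prod_normE /= normr0 max_r.
have Dzz : D (z, z) = D (z, 0) + D (0, z).
  by rewrite -linearD; congr (D _); apply: injective_projections; rewrite /= ?addr0 ?add0r.
have := FD (z, z); have := FD (z, 0); have := FD (0, z).
rewrite nzz nz0 n0z => /(_ zd) ? /(_ zd) ? /(_ zd) ?.
rewrite (subr_cross_defect _ _ _ _ (D (z, 0)) (D (0, z))) -Dzz.
apply: le_trans (ler_normB _ _) _; have := ler_normB (F (z, z) - D (z, z)) (F (z, 0) - D (z, 0)).
lra.
Qed.

Lemma differentiable_cross_defect_eq0 :
  \forall z \near 0, `|F (z, z) - F (z, 0) - F (0, z)| = `|z| -> z = 0.
Proof.
have half_gt0 : 0 < 1 / 2 :> R by lra.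
have := differentiable_cross_defect _ half_gt0; apply: filterS => z defect_le defect_eq.
apply/normr0_eq0; have := normr_ge0 z; lra.
Qed.
End CrossDefect.

Lemma continuous_app2 {S T U V : topologicalType} {h : T -> U -> V}
    {f : S -> T} {g : S -> U} :
  continuous (fun p : T * U => h p.1 p.2) -> continuous f -> continuous g ->
  continuous (fun x => h (f x) (g x)).
Proof. by move=> ch cf cg x; apply: (continuous2_cvg _ (ch (f x, g x)) (cf x) (cg x)). Qed.

Lemma continuous_mull {S : topologicalType} {mul : S -> S -> S} (a : S) :
  continuous (fun p : S * S => mul p.1 p.2) -> continuous (mul a).
Proof. by move=> cm; exact: (continuous_app2 cm (fun=> cvg_cst a) (fun=> cvg_id)). Qed.

Lemma near_isolated {S : topologicalType} {E : set S} {e : S} :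
  E e -> (\forall x \near e, E x -> x = e) ->
  exists O : set S, open O /\ O `&` E = [set e].
Proof.
move=> Ee; rewrite /prop_near1 nbhsE; case=> O [oO Oe] OE; exists O; split => //.
by apply/seteqP; split => [x [Ox Ex]|_ ->]; [exact: OE | split].
Qed.

Lemma open_fiber_isolated {S T : topologicalType} {E : set T} {q : S -> T} {e : T} :
  continuous q -> (forall x, E (q x)) ->
  (exists O : set T, open O /\ O `&` E = [set e]) -> open (q @^-1` [set e]).
Proof.
move=> cq qE [B [oB BE]].
rewrite (_ : q @^-1` [set e] = q @^-1` B); first by move/continuousP: cq; apply.
apply/seteqP; split => x /=.
  by move=> ->; have [] : (B `&` E) e by rewrite BE.
by move=> Bqx; have : (B `&` E) (q x) := conj Bqx (qE x); rewrite BE.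
Qed.

Lemma open_trace_cover (S : topologicalType) (I : Type) (D : set I) (G : I -> set S) :
  (forall i, D i -> open (G i)) -> (forall x, exists2 i, D i & G i x) ->
  forall A : set S, open A <->
    (forall i, D i -> exists O : set S, open O /\ A `&` G i = O `&` G i).
Proof.
move=> oG coverG A; split=> [oA i _|trA]; first by exists A.
rewrite openE => x Ax; have [i Di Gix] := coverG x.
have [B [oB AG]] := trA i Di.
apply: (@filterS _ _ _ (B `&` G i)); first by rewrite -AG => y [].
by apply: open_nbhs_nbhs; split; [apply: openI => //; exact: oG | rewrite -AG].
Qed.

Section IdempotentChart.
Context {R : realType} {S : topologicalType} {X : normedModType R}.
Context {mul : S -> S -> S} {W : set S} {phi : S -> X} {psi : X -> S} {e : S}.
Hypotheses (oW : open W) (We : W e) (phi_cont : {within W, continuous phi}).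
Hypotheses (phiK : forall x, W x -> psi (phi x) = x) (phi_e : phi e = 0).
Hypothesis ee : idempotents mul e.
Hypothesis dF : differentiable (fun p : X * X => phi (mul (psi p.1) (psi p.2))) 0.

Lemma chart_idempotent_near_eq :
  \forall f \near e, idempotents mul f -> mul e f = mul f e ->
    idem_le mul f e \/ idem_le mul e f -> f = e.
Proof.
set F := fun p : X * X => phi (mul (psi p.1) (psi p.2)).
have Fphi a b : W a -> W b -> F (phi a, phi b) = phi (mul a b).
  by move=> Wa Wb; rewrite /F /= !phiK.
have F0 : F 0 = 0.
  have -> : 0 = (phi e, phi e) :> X * X by rewrite phi_e.
  by rewrite Fphi // ee.
have phi_cvg : phi x @[x --> e] --> phi e.
  by move: phi_cont; rewrite continuous_open_subspace // => /(_ e (mem_set We)).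
have near_phi : \forall f \near e,
    `|F (phi f, phi f) - F (phi f, 0) - F (0, phi f)| = `|phi f| -> phi f = 0.
  by have := @differentiable_cross_defect_eq0 _ _ F dF F0; rewrite -phi_e => /phi_cvg.
have near_W : \forall f \near e, W f by apply: open_nbhs_nbhs.
move: near_W near_phi; apply: filterS2 => f Wf phi_f0 ff efC le_fe.
rewrite -(phiK _ Wf) -(phiK _ We) phi_e; congr (psi _); apply: phi_f0.
rewrite -phi_e !Fphi // ff.
case: le_fe => [fe|ef].
  by rewrite efC fe subrr sub0r normrN.
by rewrite -efC ef phi_e !subr0.
Qed.
End IdempotentChart.

Lemma C1_idempotent_near_eq {R : realType} {S : topologicalType}
    {mul : S -> S -> S} {inv : S -> S} {e : S} :
  top_clifford_semigroup mul inv -> C1_at_idempotents R mul ->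
  idempotents mul e -> \forall f \near e, idempotents mul f -> f = e.
Proof.
move=> Scliff C1 ee; have isg := top_clifford_inverse_semigroup Scliff.
have mulA := isg.1.
have mul_cont : continuous (mul e).
  by apply: continuous_mull; case: Scliff => _ [_ [_ [_ [_ []]]]].
have [X [U [W [_ [phi [psi [_ [oW [Ue [UW [_ [[_ [_ [phiK [_ [phi_cont _]]]]]
  [phi_e [_ [C1F _]]]]]]]]]]]]]]] := C1 e ee.
have We := UW e Ue.
have dF : differentiable (fun p : X * X => phi (mul (psi p.1) (psi p.2))) 0.
  by apply: C1F; split; exists e.
pose Q g := idempotents mul g -> mul e g = mul g e ->
  idem_le mul g e \/ idem_le mul e g -> g = e.
have near_e : \forall g \near e, Q g :=
  chart_idempotent_near_eq oW We phi_cont phiK phi_e ee dF.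
have mul_e_cvg : mul e f @[f --> e] --> e by rewrite -[X in _ --> X]ee; exact: mul_cont.
have near_ef : \forall f \near e, Q (mul e f) := mul_e_cvg _ near_e.
near=> f => ff.
have eff := idempotent_mul isg ee ff.
have ef_e : mul e f = e.
  apply: (near near_ef f) => //; first exact: (idempotent_comm isg ee eff).
  by left; rewrite /idem_le -mulA -(idempotent_comm isg ee ff) mulA ee.
apply: (near near_e f) => //; first exact: (idempotent_comm isg ee ff).
by right.
Unshelve. all: by end_near.
Qed.

Theorem theorem6p5 (R : realType) (S : topologicalType)
    (mul : S -> S -> S) (inv : S -> S) :
  top_clifford_semigroup mul inv ->
  C1_at_idempotents R mul ->
  (forall e, idempotents mul e ->
     exists O : set S, open O /\ O `&` idempotents mul = [set e]) /\
  (forall e, idempotents mul e -> open (max_subgroup mul inv e)) /\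
  ((forall e f, idempotents mul e -> idempotents mul f -> idem_le mul e f ->
      {within max_subgroup mul inv f, continuous (fun x => mul e x)}) /\
   (forall A : set S,
      open A <->
      (forall e, idempotents mul e ->
         exists O : set S, open O /\
           A `&` max_subgroup mul inv e = O `&` max_subgroup mul inv e))).
Proof.
move=> Scliff C1; have isg := top_clifford_inverse_semigroup Scliff.
have [_ [_ [_ [_ [_ [mul_cont inv_cont]]]]]] := Scliff.
have E_isolated e : idempotents mul e ->
    exists O : set S, open O /\ O `&` idempotents mul = [set e].
  by move=> ee; exact: (near_isolated ee (C1_idempotent_near_eq Scliff C1 ee)).
have G_open e : idempotents mul e -> open (max_subgroup mul inv e).
  move=> ee; apply: (open_fiber_isolated _ _ (E_isolated e ee)).
    exact: (continuous_app2 mul_cont (fun=> cvg_id) inv_cont).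
  exact: (idempotent_mul_inv isg).
do 2 split => //; split.
  by move=> e f _ _ _; apply: continuous_subspaceT; exact: continuous_mull.
apply: open_trace_cover => // x.
by exists (mul x (inv x)); [exact: (idempotent_mul_inv isg) |].
Qed.
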